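(* Let $f:2^V\to\mathbb{Z}_{\ge0}$ be a connectivity function, $W\subseteq V$, and $(C_1,C_2,C_3)$ a minimum $W$-improvement of arity 3. Then for every $i\in\{1,2,3\}$ it holds that $f(W\cup C_i)>f(W)/2$ and $f((V\setminus W)\cup C_i)>f(W)/2$.
   Context: A connectivity function $f:2^V\to\mathbb{Z}_{\ge0}$ ($V$ finite) satisfies $f(\emptyset)=0$, $f(X)=f(V\setminus X)$, and $f(X\cup Y)+f(X\cap Y)\le f(X)+f(Y)$. For $W\subseteq V$, a $W$-improvement is a tripartition $(C_1,C_2,C_3)$ of $V$ (pairwise disjoint, possibly empty, union $V$) with $f(C_i)<f(W)/2$, $f(C_i\cap W)<f(W)$, $f(C_i\cap(V\setminus W))<f(W)$ for each $i$. Its width is $\max_i f(C_i)$, its sum-width is $\sum_i f(C_i)$, and its arity is the number of nonempty $C_i$. A $W$-improvement is minimum if it has minimum width among all $W$-improvements, subject to that minimum arity, and subject to those minimum sum-width. *)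

From mathcomp Require Import all_boot.
Set Implicit Arguments. Unset Strict Implicit. Unset Printing Implicit Defensive.

(* V is the finite type T; subsets of V are {set T}; f : {set T} -> nat. *)
Definition connectivity_function (T : finType) (f : {set T} -> nat) : Prop :=
  [/\ f set0 = 0,
      (forall X, f X = f (~: X)) &
      (forall X Y, f (X :|: Y) + f (X :&: Y) <= f X + f Y)].

Definition tripartition (T : finType) (C : 'I_3 -> {set T}) : Prop :=
  (forall i j, i != j -> [disjoint C i & C j]) /\
  \bigcup_(i < 3) C i = [set: T].

(* f(C_i) < f(W)/2 is written 2 * f(C_i) < f(W) (exact, no rounding). *)
Definition W_improvement (T : finType) (f : {set T} -> nat) (W : {set T})
    (C : 'I_3 -> {set T}) : Prop :=
  tripartition C /\
  forall i, [/\ 2 * f (C i) < f W, f (C i :&: W) < f W & f (C i :&: ~: W) < f W].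

Definition width (T : finType) (f : {set T} -> nat) (C : 'I_3 -> {set T}) : nat :=
  \max_(i < 3) f (C i).

Definition sum_width (T : finType) (f : {set T} -> nat) (C : 'I_3 -> {set T}) : nat :=
  \sum_(i < 3) f (C i).

Definition arity (T : finType) (C : 'I_3 -> {set T}) : nat :=
  #|[set i : 'I_3 | C i != set0]|.

Definition minimum_W_improvement (T : finType) (f : {set T} -> nat) (W : {set T})
    (C : 'I_3 -> {set T}) : Prop :=
  W_improvement f W C /\
  forall D, W_improvement f W D ->
    width f C < width f D \/
    (width f C = width f D /\
      (arity C < arity D \/
       (arity C = arity D /\ sum_width f C <= sum_width f D))).

From mathcomp Require Import all_boot zify.
Set Implicit Arguments. Unset Strict Implicit. Unset Printing Implicit Defensive.

(* If 2 f(W ∪ C_i) <= f(W), then the bipartition (C_i, V \ C_i, ∅) is itself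
   a W-improvement: f(V \ C_i) = f(C_i), and submodularity against V \ C_i
   gives f(W \ C_i) <= f(W ∪ C_i) + f(C_i) < f(W).  Its width f(C_i) does not
   exceed that of C, while its arity is at most 2 < 3, contradicting the
   minimality of C.  The bound for V \ W is the same statement for the
   complement of W, since W-improvements and (V \ W)-improvements coincide. *)

Definition bipartition (T : finType) (A : {set T}) (j : 'I_3) : {set T} :=
  match val j with 0 => A | 1 => ~: A | _ => set0 end.

Lemma bipartition_tripartition (T : finType) (A : {set T}) :
  tripartition (bipartition A).
Proof.
split.
  move=> [[|[|[|j]]] Hj] // [[|[|[|k]]] Hk] // _; rewrite -setI_eq0 /bipartition /=;
    by rewrite ?setICr ?setCr ?setI0 ?set0I // setIC setICr.
apply/setP => x; rewrite !big_ord_recl big_ord0 /bipartition /= !inE.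
by case: (x \in A).
Qed.

Lemma arity_bipartition (T : finType) (A : {set T}) : arity (bipartition A) < 3.
Proof.
have : [set j | bipartition A j != set0] \proper [set: 'I_3].
  rewrite properT; apply/negP => /eqP allnz.
  have : (@inord 2 2) \in [set: 'I_3] by rewrite inE.
  by rewrite -allnz inE /bipartition /= inordK // eqxx.
by move/proper_card; rewrite cardsT card_ord.
Qed.

Lemma leq_width (T : finType) (f : {set T} -> nat) (C : 'I_3 -> {set T}) i :
  f (C i) <= width f C.
Proof. exact: (@leq_bigmax _ (fun j => f (C j)) i). Qed.

Section ConnectivityFunction.

Variables (T : finType) (f : {set T} -> nat).
Hypothesis conn_f : connectivity_function f.

Let f0 : f set0 = 0. Proof. by case: conn_f. Qed.
Let fC X : f X = f (~: X). Proof. by case: conn_f. Qed.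
Let f_submod X Y : f (X :|: Y) + f (X :&: Y) <= f X + f Y.
Proof. by case: conn_f. Qed.

Lemma conn_setT : f setT = 0.
Proof. by rewrite fC setCT f0. Qed.

Lemma conn_setD (A Y : {set T}) : f (A :\: Y) <= f (A :|: Y) + f Y.
Proof.
have := f_submod (A :|: Y) (~: Y).
by rewrite -setUA setUCr setUT conn_setT add0n -fC setIUl setICr setU0 setDE.
Qed.

Lemma width_bipartition (A : {set T}) : width f (bipartition A) = f A.
Proof. rewrite /width !big_ord_recl big_ord0 /bipartition /= -fC f0; lia. Qed.

Lemma W_improvement_setC W C :
  W_improvement f W C -> W_improvement f (~: W) C.
Proof. by move=> [tp hC]; split=> // i; rewrite -fC setCK; case: (hC i). Qed.

Lemma minimum_W_improvement_setC W C :
  minimum_W_improvement f W C -> minimum_W_improvement f (~: W) C.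
Proof.
move=> [hC hmin]; split=> [|D hD]; first exact: W_improvement_setC.
by apply: hmin; rewrite -[W]setCK; apply: W_improvement_setC.
Qed.

Lemma W_improvement_bipartition W C i :
  W_improvement f W C -> 2 * f (W :|: C i) <= f W ->
  W_improvement f W (bipartition (C i)).
Proof.
move=> [_ hC] hWCi; have [hCi hCiW hCinW] := hC i.
have hWCiD : f (W :\: C i) < f W.
  by apply: leq_ltn_trans (conn_setD W (C i)) _; lia.
split=> [|[[|[|[|j]]] Hj]] //; rewrite /bipartition /=.
- exact: bipartition_tripartition.
- rewrite -fC -setCU -fC setUC setIC -setDE; split=> //; lia.
- by rewrite !set0I f0; split; lia.
Qed.

Lemma minimum_W_improvement_join W C i :
  minimum_W_improvement f W C -> arity C = 3 -> f W < 2 * f (W :|: C i).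
Proof.
move=> [hC hmin] arC; rewrite ltnNge; apply/negP => hWCi.
have := hmin _ (W_improvement_bipartition hC hWCi).
have := leq_width f C i; have := arity_bipartition (C i).
rewrite width_bipartition; lia.
Qed.

End ConnectivityFunction.

Theorem lemma8 (T : finType) (f : {set T} -> nat) (W : {set T})
    (C : 'I_3 -> {set T}) :
  connectivity_function f ->
  minimum_W_improvement f W C ->
  arity C = 3 ->
  forall i : 'I_3,
    f W < 2 * f (W :|: C i) /\ f W < 2 * f (~: W :|: C i).
Proof.
move=> conn_f minC arC i; have [_ fC _] := conn_f.
split; first exact: (minimum_W_improvement_join conn_f i minC arC).
have minCc := minimum_W_improvement_setC conn_f minC.
rewrite fC; exact: (minimum_W_improvement_join conn_f i minCc arC).
Qed.
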